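(* Let $G$ act on the CAT(0) cube complex $X$ by automorphisms non-transversely, and let $\gamma$ be a segment. Then for all vertices $x,y,z$ of $X$, $$\left|\omega_{\gamma}(x,y)+\omega_{\gamma}(y,z)+\omega_{\gamma}(z,x)\right|\le 6.$$
   Context: $\mathcal{H}(X)$ is the set of halfspaces of $X$, $\overline\Phi$ the complement of $\Phi$. Two halfspaces are nested if one of $\Phi\subseteq\Psi$, $\overline{\Phi}\subseteq\Psi$, $\Phi\subseteq\overline{\Psi}$, $\overline{\Phi}\subseteq\overline{\Psi}$ holds, transverse otherwise; the action is non-transverse if there are no $\Phi\in\mathcal H(X)$, $h\in G$ with $\Phi$ and $h\Phi$ transverse. $\Phi\supsetneq\Psi$ tightly means $\Phi\supsetneq\Psi$ and no halfspace $\Phi'$ satisfies $\Phi\supsetneq\Phi'\supsetneq\Psi$. For vertices $x,y$, $[x,y]=\{\Phi\in\mathcal H(X): x\notin\Phi,\ y\in\Phi\}$. A segment is a finite sequence $\gamma=(\Phi_0,\dots,\Phi_r)$, $r\ge0$, of halfspaces with $\Phi_i\supsetneq\Phi_{i+1}$ tightly; its reverse is $\overline\gamma=(\overline\Phi_r,\dots,\overline\Phi_0)$. Two segments overlap if some halfspace of one is equal or transverse to some halfspace of the other. A segment is in $[x,y]$ if all its halfspaces lie in $[x,y]$. Copies of $\gamma$ are the segments $h\gamma$, $h\in G$. $c_\gamma(x,y)$ is the largest cardinality of a set of pairwise non-overlapping copies of $\gamma$ all lying in $[x,y]$, and $\omega_\gamma(x,y)=c_\gamma(x,y)-c_{\overline\gamma}(x,y)$.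 *)

(* A CAT(0) cube complex X is represented by its 1-skeleton,
   which (Chepoi, Roller, Gerasimov) is exactly a median graph; vertices of X
   are the vertices of the graph, halfspaces of X are (as sets of vertices) the
   sets W(a,b) = {v | d(v,b) < d(v,a)} for edges ab, and automorphisms of X
   are the graph automorphisms. *)
From Stdlib Require Import List Arith ZArith.
Import ListNotations.

Section Defs.
Variable V : Type.
Variable adj : V -> V -> Prop.

Inductive walk : V -> V -> nat -> Prop :=
| walk_nil : forall x, walk x x 0
| walk_cons : forall x y z n, adj x y -> walk y z n -> walk x z (S n).

Definition gdist (x y : V) (n : nat) : Prop :=
  walk x y n /\ forall m, walk x y m -> n <= m.

Definition between (x m y : V) : Prop :=
  exists a b c, gdist x m a /\ gdist m y b /\ gdist x y c /\ a + b = c.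

Definition median_graph : Prop :=
  (forall x, ~ adj x x) /\
  (forall x y, adj x y -> adj y x) /\
  (forall x y, exists n, walk x y n) /\
  (forall x y z, exists m,
      (between x m y /\ between y m z /\ between z m x) /\
      forall m', between x m' y /\ between y m' z /\ between z m' x -> m' = m).

Definition vset := V -> Prop.
Definition subset (A B : vset) : Prop := forall v, A v -> B v.
Definition seteq (A B : vset) : Prop := subset A B /\ subset B A.
Definition compl (A : vset) : vset := fun v => ~ A v.
Definition ssubset (A B : vset) : Prop := subset A B /\ ~ subset B A.

Definition is_halfspace (P : vset) : Prop :=
  exists a b, adj a b /\
    forall v, P v <-> exists da db, gdist v a da /\ gdist v b db /\ db < da.

Definition nested (P Q : vset) : Prop :=
  subset P Q \/ subset (compl P) Q \/ subset P (compl Q) \/ subset (compl P) (compl Q).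
Definition transverse (P Q : vset) : Prop := ~ nested P Q.

Definition tightly_contains (P Q : vset) : Prop :=
  ssubset Q P /\ ~ exists P', is_halfspace P' /\ ssubset P' P /\ ssubset Q P'.

Fixpoint chain (l : list vset) : Prop :=
  match l with
  | P :: ((Q :: _) as l') => tightly_contains P Q /\ chain l'
  | _ => True
  end.
Definition is_segment (g : list vset) : Prop :=
  g <> [] /\ (forall P, In P g -> is_halfspace P) /\ chain g.

Definition seg_rev (g : list vset) : list vset := map compl (rev g).

Definition overlap (g1 g2 : list vset) : Prop :=
  exists P Q, In P g1 /\ In Q g2 /\ (seteq P Q \/ transverse P Q).

Definition in_interval (x y : V) (P : vset) : Prop :=
  is_halfspace P /\ ~ P x /\ P y.
Definition seg_in (x y : V) (g : list vset) : Prop :=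
  forall P, In P g -> in_interval x y P.

End Defs.

Record group := Group {
  gcar :> Type;
  gmul : gcar -> gcar -> gcar;
  gone : gcar;
  ginv : gcar -> gcar;
  gmulA : forall a b c, gmul a (gmul b c) = gmul (gmul a b) c;
  gmul1 : forall a, gmul gone a = a;
  gmulV : forall a, gmul (ginv a) a = gone
}.

Definition action_by_automorphisms (G : group) (V : Type) (adj : V -> V -> Prop)
  (act : G -> V -> V) : Prop :=
  (forall v, act (gone G) v = v) /\
  (forall g h v, act (gmul G g h) v = act g (act h v)) /\
  (forall g u v, adj u v <-> adj (act g u) (act g v)).

Section Act.
Variables (G : group) (V : Type) (act : G -> V -> V).

Definition hs_act (h : G) (P : vset V) : vset V :=
  fun v => exists u, P u /\ act h u = v.
Definition seg_act (h : G) (g : list (vset V)) : list (vset V) :=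
  map (hs_act h) g.

Definition non_transverse (adj : V -> V -> Prop) : Prop :=
  ~ exists (P : vset V) (h : G), is_halfspace V adj P /\ transverse V P (hs_act h P).

Definition copies_count (adj : V -> V -> Prop) (g : list (vset V)) (x y : V)
  (k : nat) : Prop :=
  exists f : nat -> G,
    (forall i, i < k -> seg_in V adj x y (seg_act (f i) g)) /\
    (forall i j, i < j -> j < k -> ~ overlap V (seg_act (f i) g) (seg_act (f j) g)).

Definition is_c (adj : V -> V -> Prop) (g : list (vset V)) (x y : V) (k : nat) : Prop :=
  copies_count adj g x y k /\ forall m, copies_count adj g x y m -> m <= k.
End Act.

Arguments is_c {G V} act adj g x y k.
Arguments non_transverse {G V} act adj.

From Stdlib Require Import List Arith ZArith Lia.
From Stdlib Require Import Classical ClassicalEpsilon FunctionalExtensionality PropExtensionality.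

(* Two non-overlapping segments in an interval [x,y] are stacked, every halfspace
   of one strictly inside every halfspace of the other: their halfspaces are
   pairwise nested, nested halfspaces of [x,y] are comparable by inclusion, and a
   halfspace of one segment caught between consecutive halfspaces of the other
   would contradict tightness.  Hence, for a third vertex z:
   (U) in a family of pairwise non-overlapping copies in [x,y] at most one copy is
       split by z, so c(x,y) <= c([x,y] & [x,z]) + c([x,y] & [z,y]) + 1;
   (L) by non-transversality a halfspace of a copy is nested with the corresponding
       halfspace of any other copy; it follows that a copy in [x,y] & [x,z]
       overlapping some copy in [x,y] & [z,y] lies strictly below every other copy
       of its family, so at most one copy of a family in [x,y] & [x,z] meets a
       family in [x,y] & [z,y], and discarding it the two merge into a family in
       [x,y].
   Applying (U) to the three sides of the triangle x y z and (L) to the three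
   reversed sides, and using that the reversed segment has c(x,y) equal to the
   c(y,x) of the segment, bounds the cyclic sum by 6 in both directions. *)

Definition asbool (P : Prop) : bool := if excluded_middle_informative P then true else false.

Lemma asboolT (P : Prop) : P -> asbool P = true.
Proof. unfold asbool. destruct (excluded_middle_informative P); tauto. Qed.

Lemma asboolW (P : Prop) : asbool P = true -> P.
Proof. unfold asbool. destruct (excluded_middle_informative P); auto; discriminate. Qed.

Section Lists.
Variables (A : Type) (R : A -> A -> Prop).

Lemma ForallOrdPairs_filter (p : A -> bool) l :
  ForallOrdPairs R l -> ForallOrdPairs R (filter p l).
Proof.
  induction 1 as [|a l Ha Hl IH]; simpl; [constructor|].
  destruct (p a); auto. constructor; auto.
  rewrite Forall_forall in *. intros b Hb. apply filter_In in Hb. apply Ha; tauto.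
Qed.

Lemma ForallOrdPairs_app l1 l2 :
  ForallOrdPairs R l1 -> ForallOrdPairs R l2 ->
  (forall a b, In a l1 -> In b l2 -> R a b) -> ForallOrdPairs R (l1 ++ l2).
Proof.
  induction 1 as [|a l1 Ha Hl1 IH]; intros Hl2 Hcross; simpl; auto.
  constructor.
  - apply Forall_app; split; auto. rewrite Forall_forall. intros b Hb. apply Hcross; simpl; auto.
  - apply IH; auto. intros a' b Ha' Hb. apply Hcross; simpl; auto.
Qed.

Lemma ForallOrdPairs_length_le1 l :
  ForallOrdPairs R l -> (forall a b, In a l -> In b l -> ~ R a b) -> length l <= 1.
Proof.
  intros Hl Hno. destruct l as [|a [|b l]]; simpl; try lia.
  inversion Hl as [|? ? Ha]; subst. inversion Ha; subst.
  exfalso. apply (Hno a b); simpl; auto.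
Qed.

Lemma ForallOrdPairs_nth l d i j :
  ForallOrdPairs R l -> i < j -> j < length l -> R (nth i l d) (nth j l d).
Proof.
  intros Hl. revert i j. induction Hl as [|a l Ha Hl IH]; intros i j Hij Hj; simpl in *; [lia|].
  destruct i, j; try lia.
  - rewrite Forall_forall in Ha. apply Ha, nth_In. lia.
  - apply IH; lia.
Qed.

Lemma ForallOrdPairs_map_seq (f : nat -> A) s k :
  (forall i j, s <= i -> i < j -> j < s + k -> R (f i) (f j)) ->
  ForallOrdPairs R (map f (seq s k)).
Proof.
  revert s. induction k as [|k IH]; intros s Hf; simpl; constructor.
  - rewrite Forall_forall. intros b Hb. apply in_map_iff in Hb.
    destruct Hb as [j [<- Hj]]. apply in_seq in Hj. apply Hf; lia.
  - apply IH. intros i j H1 H2 H3. apply Hf; lia.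
Qed.

Lemma length_le_filter3 (p q r : A -> bool) l :
  (forall a, In a l -> p a = true \/ q a = true \/ r a = true) ->
  length l <= length (filter p l) + length (filter q l) + length (filter r l).
Proof.
  induction l as [|a l IH]; intros H; simpl; [lia|].
  assert (IH' := IH (fun b Hb => H b (or_intror Hb))).
  destruct (H a (or_introl eq_refl)) as [Ha|[Ha|Ha]]; rewrite Ha;
    destruct (p a), (q a), (r a); simpl; lia.
Qed.

End Lists.

Section Sets.
Variable V : Type.

Lemma vset_ext (P Q : vset V) : (forall v, P v <-> Q v) -> P = Q.
Proof.
  intros H. apply functional_extensionality; intros v.
  apply propositional_extensionality; auto.
Qed.

Lemma compl_compl (P : vset V) : compl V (compl V P) = P.
Proof. apply vset_ext; intros v; unfold compl; split; [apply NNPP | tauto]. Qed.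

Lemma ssubset_trans (A B C : vset V) : ssubset V A B -> ssubset V B C -> ssubset V A C.
Proof.
  intros [HAB HBA] [HBC _]. split; [intros v Hv; auto|].
  intros HCA. apply HBA. intros v Hv. apply HCA, HBC; auto.
Qed.

Lemma ssubset_asym (A B : vset V) : ssubset V A B -> ~ ssubset V B A.
Proof. intros [_ H] [H' _]. auto. Qed.

Lemma subset_compl (P Q : vset V) : subset V (compl V P) (compl V Q) <-> subset V Q P.
Proof.
  unfold subset, compl. split; intros H v Hv.
  - apply NNPP; intros Hn. apply (H v Hn); auto.
  - intros Hq. apply Hv, H; auto.
Qed.

Lemma seteq_compl (P Q : vset V) : seteq V (compl V P) (compl V Q) <-> seteq V P Q.
Proof. unfold seteq. rewrite !subset_compl. tauto. Qed.

Lemma nested_compl (P Q : vset V) : nested V (compl V P) (compl V Q) <-> nested V P Q.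
Proof. unfold nested. rewrite !compl_compl. tauto. Qed.

Lemma subset_nested (P Q : vset V) : subset V P Q -> nested V P Q.
Proof. intros H. left; auto. Qed.

Lemma nested_sym (P Q : vset V) : nested V P Q -> nested V Q P.
Proof.
  unfold nested. rewrite <- !(subset_compl Q), <- !(subset_compl (compl V Q)), !compl_compl.
  tauto.
Qed.

Lemma overlap_sym (g1 g2 : list (vset V)) : overlap V g1 g2 -> overlap V g2 g1.
Proof.
  intros [P [Q [HP [HQ Hpq]]]]. exists Q, P. repeat split; auto.
  destruct Hpq as [[H1 H2] | Ht]; [left; split; auto | right].
  intros Hn. apply Ht, nested_sym; auto.
Qed.

End Sets.

Section Chains.
Variables (V : Type) (adj : V -> V -> Prop).

Definition below_all (P : vset V) (S : vset V -> Prop) : Prop :=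
  forall Q, S Q -> ssubset V P Q.
Definition above_all (P : vset V) (S : vset V -> Prop) : Prop :=
  forall Q, S Q -> ssubset V Q P.

Definition strictly_below (g1 g2 : list (vset V)) : Prop :=
  forall P Q, In P g1 -> In Q g2 -> ssubset V P Q.

Lemma chain_one_side (S : vset V -> Prop) Q0 g :
  S Q0 -> is_halfspace V adj Q0 -> chain V adj g ->
  (forall P, In P g -> below_all P S \/ above_all P S) ->
  (forall P, In P g -> below_all P S) \/ (forall P, In P g -> above_all P S).
Proof.
  intros HQ0 Hhs. induction g as [|P g IH]; intros Hc Hside; [left; intros ? []|].
  destruct g as [|P' g].
  - destruct (Hside P (or_introl eq_refl)) as [H|H];
      [left | right]; intros R [<-|[]]; auto.
  - destruct Hc as [[HP'P Htight] Hc].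
    assert (Hrest : (forall R, In R (P' :: g) -> below_all R S) \/
                    (forall R, In R (P' :: g) -> above_all R S)).
    { apply IH; auto. intros R HR. apply Hside; right; auto. }
    destruct Hrest as [Hrest|Hrest], (Hside P (or_introl eq_refl)) as [HP|HP].
    + left. intros R [<-|HR]; auto.
    + exfalso. apply Htight. exists Q0. split; [auto|split; [auto|]].
      apply Hrest; [left; auto | auto].
    + exfalso. apply (ssubset_asym _ P Q0); auto.
      apply ssubset_trans with P'; auto. apply Hrest; [left; auto | auto].
    + right. intros R [<-|HR]; auto.
Qed.

Lemma chains_stacked g1 g2 :
  chain V adj g1 -> chain V adj g2 ->
  (forall P, In P g1 -> is_halfspace V adj P) ->
  (forall Q, In Q g2 -> is_halfspace V adj Q) ->
  (forall P Q, In P g1 -> In Q g2 -> ssubset V P Q \/ ssubset V Q P) ->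
  strictly_below g1 g2 \/ strictly_below g2 g1.
Proof.
  intros Hc1 Hc2 Hhs1 Hhs2 Hcmp.
  destruct g2 as [|Q0 g2']; [left; intros P Q _ []|].
  assert (Hside : forall P, In P g1 -> below_all P (fun Q => In Q (Q0 :: g2')) \/
                                     above_all P (fun Q => In Q (Q0 :: g2'))).
  { intros P HP.
    assert (Hcmp' : forall Q, In Q (Q0 :: g2') -> below_all Q (eq P) \/ above_all Q (eq P)).
    { intros Q HQ. destruct (Hcmp P Q HP HQ); [right | left]; intros R <-; auto. }
    destruct (chain_one_side (eq P) P (Q0 :: g2') eq_refl (Hhs1 P HP) Hc2 Hcmp') as [H|H].
    - right. intros Q HQ. apply (H Q HQ P eq_refl).
    - left. intros Q HQ. apply (H Q HQ P eq_refl). }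
  destruct (chain_one_side (fun Q => In Q (Q0 :: g2')) Q0 g1) as [H|H];
    auto using in_eq.
  - left. intros P Q HP HQ. apply H; auto.
  - right. intros Q P HQ HP. apply H; auto.
Qed.

End Chains.

Section MedianGraph.
Variables (V : Type) (adj : V -> V -> Prop).
Hypothesis HX : median_graph V adj.

Lemma adj_sym x y : adj x y -> adj y x.
Proof. destruct HX as [_ [H _]]; auto. Qed.

Lemma walk_snoc x y z n : walk V adj x y n -> adj y z -> walk V adj x z (S n).
Proof.
  induction 1; intros.
  - apply walk_cons with z; [assumption | constructor].
  - apply walk_cons with y; auto.
Qed.

Lemma walk_rev x y n : walk V adj x y n -> walk V adj y x n.
Proof.
  induction 1; [constructor|].
  apply walk_snoc with y; auto using adj_sym.
Qed.

Lemma walk0 x y : walk V adj x y 0 -> x = y.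
Proof. intros H; inversion H; auto. Qed.

Lemma gdist_sym x y n : gdist V adj x y n -> gdist V adj y x n.
Proof.
  intros [Hw Hmin]; split; [apply walk_rev; auto|].
  intros m Hm; apply Hmin, walk_rev; auto.
Qed.

Lemma gdist_unique x y n m : gdist V adj x y n -> gdist V adj x y m -> n = m.
Proof. intros [Hn Hn'] [Hm Hm']. specialize (Hn' _ Hm). specialize (Hm' _ Hn). lia. Qed.

Lemma gdist_exists x y : exists n, gdist V adj x y n.
Proof.
  destruct HX as [_ [_ [Hconn _]]]. destruct (Hconn x y) as [n Hn].
  induction n as [n IH] using lt_wf_ind.
  destruct (classic (exists m, m < n /\ walk V adj x y m)) as [[m [Hm Hw]] | Hno].
  - apply (IH m); auto.
  - exists n; split; auto. intros m Hm.
    destruct (le_lt_dec n m); auto. exfalso; eauto.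
Qed.

Lemma gdist_adj a b : adj a b -> gdist V adj a b 1.
Proof.
  intros Hab. split; [apply walk_cons with b; auto; constructor|].
  intros m Hm. destruct m; [|lia]. apply walk0 in Hm; subst.
  destruct HX as [Hirr _]. exfalso; apply (Hirr b); auto.
Qed.

(* The median of [a], [b], [v] is [a] or [b]; either way [d(v,a)] and [d(v,b)]
   differ by one. *)
Lemma gdist_edge_neq a b v k : adj a b -> gdist V adj v a k -> ~ gdist V adj v b k.
Proof.
  intros Hab Ha Hb.
  destruct HX as [_ [_ [_ Hmed]]].
  destruct (Hmed a b v) as [m [[Habm [Hbv Hva]] _]].
  destruct Habm as [p [q [c [Hp [Hq [Hc Hpq]]]]]].
  assert (c = 1) by (eapply gdist_unique; eauto using gdist_adj). subst c.
  destruct p.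
  - apply proj1, walk0 in Hp. subst m.
    destruct Hbv as [q1 [r1 [c1 [Hq1 [Hr1 [Hc1 Hs]]]]]].
    assert (q1 = 1) by (eapply gdist_unique; eauto using gdist_adj, adj_sym).
    assert (r1 = k) by (eapply gdist_unique; eauto using gdist_sym).
    assert (c1 = k) by (eapply gdist_unique; eauto using gdist_sym).
    lia.
  - assert (q = 0) by lia. subst q. apply proj1, walk0 in Hq. subst m.
    destruct Hva as [q1 [r1 [c1 [Hq1 [Hr1 [Hc1 Hs]]]]]].
    assert (q1 = k) by (eapply gdist_unique; eauto).
    assert (r1 = 1) by (eapply gdist_unique; eauto using gdist_adj, adj_sym).
    assert (c1 = k) by (eapply gdist_unique; eauto).
    lia.
Qed.

Lemma halfspace_compl P : is_halfspace V adj P -> is_halfspace V adj (compl V P).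
Proof.
  intros [a [b [Hab HP]]]. exists b, a. split; [apply adj_sym; auto|].
  intros v. unfold compl. rewrite HP.
  destruct (gdist_exists v a) as [da Ha], (gdist_exists v b) as [db Hb].
  assert (da <> db) by (intros <-; eapply gdist_edge_neq; eauto).
  split.
  - intros Hn. exists db, da. split; [auto | split; [auto |]].
    destruct (lt_dec db da); [|lia]. exfalso; apply Hn; exists da, db; auto.
  - intros [db' [da' [Hb' [Ha' Hlt]]]] [da'' [db'' [Ha'' [Hb'' Hlt']]]].
    assert (da' = da) by (eapply gdist_unique; eauto).
    assert (da'' = da) by (eapply gdist_unique; eauto).
    assert (db' = db) by (eapply gdist_unique; eauto).
    assert (db'' = db) by (eapply gdist_unique; eauto).
    lia.
Qed.

Lemma halfspace_compl_iff P : is_halfspace V adj (compl V P) <-> is_halfspace V adj P.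
Proof.
  split; [|apply halfspace_compl].
  intros H. rewrite <- (compl_compl V P). apply halfspace_compl; auto.
Qed.

Lemma in_interval_compl x y P : in_interval V adj x y (compl V P) <-> in_interval V adj y x P.
Proof.
  unfold in_interval. rewrite halfspace_compl_iff. unfold compl.
  split; intros [H1 [H2 H3]]; repeat split; auto. apply NNPP; auto.
Qed.

End MedianGraph.

Section Intervals.
Variables (V : Type) (adj : V -> V -> Prop) (x y : V).

Lemma in_interval_nested_subset P Q :
  in_interval V adj x y P -> in_interval V adj x y Q -> nested V P Q ->
  subset V P Q \/ subset V Q P.
Proof.
  intros [_ [HPx HPy]] [_ [HQx HQy]] [H|[H|[H|H]]].
  - left; auto.
  - exfalso. apply HQx, H; auto.
  - exfalso. apply (H y HPy); auto.
  - right. apply subset_compl; auto.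
Qed.

Lemma in_interval_nested_ssubset P Q :
  in_interval V adj x y P -> in_interval V adj x y Q -> nested V P Q -> ~ seteq V P Q ->
  ssubset V P Q \/ ssubset V Q P.
Proof.
  intros HP HQ Hn Hne.
  destruct (in_interval_nested_subset P Q HP HQ Hn); [left | right];
    split; auto; intros Hrev; apply Hne; split; auto.
Qed.

Lemma nonoverlapping_segments_stacked g1 g2 :
  is_segment V adj g1 -> is_segment V adj g2 ->
  seg_in V adj x y g1 -> seg_in V adj x y g2 -> ~ overlap V g1 g2 ->
  strictly_below V g1 g2 \/ strictly_below V g2 g1.
Proof.
  intros [_ [Hhs1 Hc1]] [_ [Hhs2 Hc2]] Hin1 Hin2 Hno.
  apply (chains_stacked V adj); auto.
  intros P Q HP HQ. apply in_interval_nested_ssubset; auto.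
  - apply NNPP; intros Hn. apply Hno. exists P, Q. auto.
  - intros Heq. apply Hno. exists P, Q. auto.
Qed.

End Intervals.

Definition splits (V : Type) (z : V) (g : list (vset V)) : Prop :=
  (exists P, In P g /\ P z) /\ (exists Q, In Q g /\ ~ Q z).

Lemma stacked_not_both_split V (z : V) g1 g2 :
  strictly_below V g1 g2 \/ strictly_below V g2 g1 -> splits V z g1 -> ~ splits V z g2.
Proof.
  intros Hst [[P1 [HP1 Hz1]] [Q1 [HQ1 Hz1']]] [[P2 [HP2 Hz2]] [Q2 [HQ2 Hz2']]].
  destruct Hst as [H|H].
  - apply Hz2'. apply (H P1 Q2 HP1 HQ2); auto.
  - apply Hz1'. apply (H P2 Q1 HP2 HQ1); auto.
Qed.

Lemma towards_away_or_splits V (z : V) g :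
  (forall P, In P g -> P z) \/ (forall P, In P g -> ~ P z) \/ splits V z g.
Proof.
  destruct (classic (exists P, In P g /\ P z)) as [Hin|Hin];
    destruct (classic (exists Q, In Q g /\ ~ Q z)) as [Hout|Hout].
  - right; right; split; auto.
  - left. intros P HP. apply NNPP. intros Hz. apply Hout. eauto.
  - right; left. intros P HP Hz. apply Hin. eauto.
  - left. intros P HP. apply NNPP. intros Hz. apply Hout. eauto.
Qed.

Section Action.
Variables (G : group) (V : Type) (adj : V -> V -> Prop) (act : G -> V -> V).
Hypothesis Hact : action_by_automorphisms G V adj act.

Lemma act1 v : act (gone G) v = v.
Proof. apply Hact. Qed.

Lemma actM g h v : act (gmul G g h) v = act g (act h v).
Proof. apply Hact. Qed.

Lemma act_adj g u v : adj u v <-> adj (act g u) (act g v).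
Proof. apply Hact. Qed.

Lemma act_invK h v : act (ginv G h) (act h v) = v.
Proof. rewrite <- actM, gmulV, act1; auto. Qed.

Lemma act_inj h u v : act h u = act h v -> u = v.
Proof. intros H. rewrite <- (act_invK h u), <- (act_invK h v), H; auto. Qed.

Lemma act_Kinv h v : act h (act (ginv G h) v) = v.
Proof. apply act_inj with (ginv G h). rewrite act_invK; auto. Qed.

Lemma walk_act h u w n : walk V adj u w n -> walk V adj (act h u) (act h w) n.
Proof.
  induction 1; [constructor|].
  apply walk_cons with (act h y); auto. apply act_adj; auto.
Qed.

Lemma walk_act_iff h u w n : walk V adj (act h u) (act h w) n <-> walk V adj u w n.
Proof.
  split; [|apply walk_act].
  intros Hw. apply walk_act with (h := ginv G h) in Hw. rewrite !act_invK in Hw; auto.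
Qed.

Lemma gdist_act h u w d : gdist V adj (act h u) (act h w) d <-> gdist V adj u w d.
Proof.
  unfold gdist. split; intros [Hw Hmin]; split.
  - apply walk_act_iff with h; auto.
  - intros m Hm. apply Hmin, walk_act; auto.
  - apply walk_act; auto.
  - intros m Hm. apply Hmin, walk_act_iff with h; auto.
Qed.

Lemma halfspace_act h P : is_halfspace V adj P -> is_halfspace V adj (hs_act G V act h P).
Proof.
  intros [a [b [Hab HP]]]. exists (act h a), (act h b). split; [apply act_adj; auto|].
  intros v. unfold hs_act. split.
  - intros [u [Hu <-]]. apply HP in Hu. destruct Hu as [da [db [Ha [Hb Hlt]]]].
    exists da, db. rewrite !gdist_act; auto.
  - intros [da [db [Ha [Hb Hlt]]]]. exists (act (ginv G h) v). split; [|apply act_Kinv].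
    apply HP. exists da, db.
    rewrite <- (act_Kinv h v) in Ha, Hb. rewrite gdist_act in Ha, Hb. auto.
Qed.

Lemma hs_actM g h P : hs_act G V act g (hs_act G V act h P) = hs_act G V act (gmul G g h) P.
Proof.
  apply vset_ext; intros v; unfold hs_act; split.
  - intros [u [[w [Hw <-]] <-]]. exists w. rewrite actM; auto.
  - intros [w [Hw <-]]. exists (act h w). split; [exists w; auto|]. rewrite actM; auto.
Qed.

Lemma hs_act1 P : hs_act G V act (gone G) P = P.
Proof.
  apply vset_ext; intros v; unfold hs_act; split.
  - intros [u [Hu <-]]. rewrite act1; auto.
  - intros Hv. exists v. rewrite act1; auto.
Qed.

Lemma hs_act_invK h P : hs_act G V act (ginv G h) (hs_act G V act h P) = P.
Proof. rewrite hs_actM, gmulV, hs_act1; auto. Qed.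

Lemma hs_act_compl h P : hs_act G V act h (compl V P) = compl V (hs_act G V act h P).
Proof.
  apply vset_ext; intros v; unfold hs_act, compl; split.
  - intros [u [Hu <-]] [u' [Hu' Heq]]. apply act_inj in Heq. subst; auto.
  - intros Hn. exists (act (ginv G h) v). split; [|apply act_Kinv].
    intros Hp. apply Hn. exists (act (ginv G h) v). split; auto. apply act_Kinv.
Qed.

Lemma subset_act h P Q : subset V P Q -> subset V (hs_act G V act h P) (hs_act G V act h Q).
Proof. intros H v [u [Hu Huv]]. exists u; auto. Qed.

Lemma subset_act_iff h P Q :
  subset V (hs_act G V act h P) (hs_act G V act h Q) <-> subset V P Q.
Proof.
  split; [|apply subset_act].
  intros H. apply subset_act with (h := ginv G h) in H. rewrite !hs_act_invK in H; auto.
Qed.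

Lemma ssubset_act h P Q : ssubset V P Q -> ssubset V (hs_act G V act h P) (hs_act G V act h Q).
Proof. unfold ssubset. rewrite !subset_act_iff. auto. Qed.

Lemma tightly_contains_act h P Q : tightly_contains V adj P Q ->
  tightly_contains V adj (hs_act G V act h P) (hs_act G V act h Q).
Proof.
  intros [Hs Hno]. split; [apply ssubset_act; auto|].
  intros [R [HR [H1 H2]]]. apply Hno. exists (hs_act G V act (ginv G h) R).
  split; [apply halfspace_act; auto|].
  rewrite <- (hs_act_invK h P), <- (hs_act_invK h Q). split; apply ssubset_act; auto.
Qed.

Lemma chain_act h g : chain V adj g -> chain V adj (seg_act G V act h g).
Proof.
  unfold seg_act. induction g as [|P [|Q g] IH]; simpl; auto.
  intros [HPQ Hc]. split; [apply tightly_contains_act; auto | apply IH; auto].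
Qed.

Lemma segment_act h g : is_segment V adj g -> is_segment V adj (seg_act G V act h g).
Proof.
  intros [Hne [Hhs Hc]]. unfold seg_act. repeat split.
  - destruct g; [contradiction | discriminate].
  - intros P HP. apply in_map_iff in HP. destruct HP as [Q [<- HQ]]. apply halfspace_act; auto.
  - apply chain_act; auto.
Qed.

End Action.

Section Reversal.
Variables (V : Type) (adj : V -> V -> Prop) (G : group) (act : G -> V -> V).
Hypothesis HX : median_graph V adj.
Hypothesis Hact : action_by_automorphisms G V adj act.

Lemma seg_act_rev h g :
  seg_act G V act h (seg_rev V g) = map (compl V) (rev (seg_act G V act h g)).
Proof.
  unfold seg_act, seg_rev. rewrite map_map, <- map_rev, map_map.
  apply map_ext. intros P. apply (hs_act_compl G V adj act Hact).
Qed.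

Lemma seg_in_rev x y g : seg_in V adj x y (map (compl V) (rev g)) <-> seg_in V adj y x g.
Proof.
  unfold seg_in. split.
  - intros H P HP. apply (in_interval_compl V adj HX). apply H, in_map, in_rev.
    rewrite rev_involutive; auto.
  - intros H P HP. apply in_map_iff in HP. destruct HP as [Q [<- HQ]].
    apply (in_interval_compl V adj HX), H, in_rev; auto.
Qed.

Lemma overlap_rev g1 g2 :
  overlap V (map (compl V) (rev g1)) (map (compl V) (rev g2)) <-> overlap V g1 g2.
Proof.
  unfold overlap, transverse.
  assert (Hin : forall P g, In (compl V P) (map (compl V) (rev g)) <-> In P g).
  { intros P g. rewrite in_map_iff. split.
    - intros [Q [HQ HQg]]. rewrite <- (compl_compl V P), <- HQ, compl_compl.
      apply in_rev; auto.
    - intros HP. exists P. split; auto. apply in_rev. rewrite rev_involutive; auto. }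
  split.
  - intros [P [Q [HP [HQ H]]]].
    exists (compl V P), (compl V Q). rewrite <- Hin, <- (Hin _ g2), !compl_compl.
    rewrite <- seteq_compl, <- nested_compl, !compl_compl. auto.
  - intros [P [Q [HP [HQ H]]]].
    exists (compl V P), (compl V Q). rewrite Hin, Hin, seteq_compl, nested_compl. auto.
Qed.

Lemma copies_count_rev g x y k :
  copies_count G V act adj (seg_rev V g) x y k <-> copies_count G V act adj g y x k.
Proof.
  unfold copies_count. setoid_rewrite seg_act_rev.
  setoid_rewrite seg_in_rev. setoid_rewrite overlap_rev. tauto.
Qed.

Lemma is_c_rev g x y c : is_c act adj (seg_rev V g) x y c <-> is_c act adj g y x c.
Proof. unfold is_c. setoid_rewrite copies_count_rev. tauto. Qed.

End Reversal.

Section Copies.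
Variables (V : Type) (adj : V -> V -> Prop) (G : group) (act : G -> V -> V).
Hypothesis Hact : action_by_automorphisms G V adj act.
Hypothesis Hnt : non_transverse act adj.
Variable gam : list (vset V).
Hypothesis Hgam : is_segment V adj gam.

Local Notation copy h := (seg_act G V act h gam).

Definition copy_in (S : vset V -> Prop) (h : G) : Prop := forall P, In P (copy h) -> S P.

Definition packing (S : vset V -> Prop) (l : list G) : Prop :=
  (forall h, In h l -> copy_in S h) /\
  ForallOrdPairs (fun h h' => ~ overlap V (copy h) (copy h')) l.

Definition has_packing (S : vset V -> Prop) (k : nat) : Prop :=
  exists l, length l = k /\ packing S l.

Lemma copy_in_weaken (S T : vset V -> Prop) h :
  (forall P, S P -> T P) -> copy_in S h -> copy_in T h.
Proof. intros HST Hh P HP. apply HST, Hh; auto. Qed.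

Lemma copy_segment h : is_segment V adj (copy h).
Proof. apply (segment_act G V adj act Hact); auto. Qed.

Lemma copies_stacked x y h h' :
  copy_in (in_interval V adj x y) h -> copy_in (in_interval V adj x y) h' ->
  ~ overlap V (copy h) (copy h') ->
  strictly_below V (copy h) (copy h') \/ strictly_below V (copy h') (copy h).
Proof.
  intros Hh Hh'. apply (nonoverlapping_segments_stacked V adj x y); auto using copy_segment.
Qed.

Lemma copy_counterpart h h' Q :
  In Q (copy h) -> exists Q', In Q' (copy h') /\ nested V Q Q'.
Proof.
  intros HQ. unfold seg_act in *. apply in_map_iff in HQ. destruct HQ as [P [<- HP]].
  exists (hs_act G V act h' P). split; [apply in_map; auto|].
  replace (hs_act G V act h' P)
    with (hs_act G V act (gmul G h' (ginv G h)) (hs_act G V act h P)).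
  - apply NNPP. intros Htr. apply Hnt. exists (hs_act G V act h P), (gmul G h' (ginv G h)).
    split; auto. apply (halfspace_act G V adj act Hact), Hgam; auto.
  - rewrite (hs_actM G V adj act Hact), <- gmulA, gmulV, <- (hs_actM G V adj act Hact),
      (hs_act1 G V adj act Hact); auto.
Qed.

(* If [P] in [a] meets [R] in [copy hb], the counterpart [Q] of [R] in [copy h'] is
   nested with [R] and contains [z], hence contains [R]; so [Q ⊊ P] would make [P]
   and [R] nested. *)
Lemma overlap_forces_below x y z a h' hb :
  (forall P, In P a -> in_interval V adj x y P /\ P z) ->
  copy_in (fun P => in_interval V adj x y P /\ P z) h' ->
  copy_in (fun P => in_interval V adj x y P /\ ~ P z) hb ->
  overlap V a (copy hb) -> ~ overlap V a (copy h') ->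
  exists P Q, In P a /\ In Q (copy h') /\ ssubset V P Q.
Proof.
  intros Ha Ha' Hb [P [R [HP [HR Hov]]]] Hno.
  destruct (copy_counterpart hb h' R HR) as [Q [HQ HRQ]].
  destruct (Ha P HP) as [HPi HPz], (Ha' Q HQ) as [HQi HQz], (Hb R HR) as [HRi HRz].
  destruct Hov as [[HPR _] | Htr]; [exfalso; apply HRz, HPR; auto|].
  assert (HRsQ : subset V R Q).
  { destruct (in_interval_nested_subset V adj x y R Q HRi HQi HRQ) as [H|H]; auto.
    exfalso; apply HRz, H; auto. }
  exists P, Q. split; [auto | split; [auto|]].
  destruct (in_interval_nested_ssubset V adj x y P Q HPi HQi) as [H|H]; auto.
  - apply NNPP. intros Hn. apply Hno. exists P, Q. auto.
  - intros Heq. apply Hno. exists P, Q. auto.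
  - exfalso. apply Htr, nested_sym, subset_nested.
    intros v Hv. apply (proj1 H), HRsQ; auto.
Qed.

Lemma has_packing_weaken (S S' : vset V -> Prop) k :
  (forall P, S P -> S' P) -> has_packing S k -> has_packing S' k.
Proof.
  intros HS [l [Hk [Hin Hno]]]. exists l. split; [auto | split; [|auto]].
  intros h Hh P HP. apply HS, (Hin h Hh); auto.
Qed.

Lemma has_packing_meet_comm (S T : vset V -> Prop) k :
  has_packing (fun P => S P /\ T P) k -> has_packing (fun P => T P /\ S P) k.
Proof. apply has_packing_weaken. tauto. Qed.

Lemma packing_filter S T (p : G -> bool) l :
  (forall h, p h = true -> copy_in S h -> copy_in T h) ->
  packing S l -> packing T (filter p l).
Proof.
  intros HST [Hin Hno]. split; [|apply ForallOrdPairs_filter; auto].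
  intros h Hh. apply filter_In in Hh. apply HST; [|apply Hin]; tauto.
Qed.

Lemma copies_count_packing x y k :
  copies_count G V act adj gam x y k <-> has_packing (in_interval V adj x y) k.
Proof.
  split.
  - intros [f [Hin Hno]]. exists (map f (seq 0 k)).
    split; [rewrite length_map, length_seq; auto | split].
    + intros h Hh. apply in_map_iff in Hh. destruct Hh as [i [<- Hi]].
      apply in_seq in Hi. apply Hin; lia.
    + apply ForallOrdPairs_map_seq. intros i j _ Hij Hj. apply Hno; lia.
  - intros [l [<- [Hin Hno]]]. exists (fun i => nth i l (gone G)). split.
    + intros i Hi. apply Hin, nth_In; auto.
    + intros i j Hij Hj. exact (ForallOrdPairs_nth _ _ l _ i j Hno Hij Hj).
Qed.

Lemma overlapping_copies_absurd x y z a a' b b' :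
  copy_in (fun P => in_interval V adj x y P /\ in_interval V adj x z P) a ->
  copy_in (fun P => in_interval V adj x y P /\ in_interval V adj x z P) a' ->
  copy_in (fun P => in_interval V adj x y P /\ in_interval V adj z y P) b ->
  copy_in (fun P => in_interval V adj x y P /\ in_interval V adj z y P) b' ->
  ~ overlap V (copy a) (copy a') ->
  overlap V (copy a) (copy b) -> overlap V (copy a') (copy b') -> False.
Proof.
  intros Ha Ha' Hb Hb' Hno Hab Hab'.
  apply (copy_in_weaken _ (fun P => in_interval V adj x y P /\ P z)) in Ha, Ha';
    [| unfold in_interval; tauto ..].
  apply (copy_in_weaken _ (fun P => in_interval V adj x y P /\ ~ P z)) in Hb, Hb';
    [| unfold in_interval; tauto ..].
  destruct (overlap_forces_below x y z (copy a) a' b) as [P [Q [HP [HQ HPQ]]]]; auto.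
  destruct (overlap_forces_below x y z (copy a') a b') as [P' [Q' [HP' [HQ' HPQ']]]];
    auto using overlap_sym.
  assert (Hst : strictly_below V (copy a) (copy a') \/ strictly_below V (copy a') (copy a)).
  { apply (copies_stacked x y); auto; intros R HR; [apply Ha | apply Ha']; auto. }
  destruct Hst as [Hst|Hst].
  - apply (ssubset_asym V P' Q'); auto.
  - apply (ssubset_asym V P Q); auto.
Qed.

Lemma has_packing_split x y z k :
  has_packing (in_interval V adj x y) k ->
  exists a b,
    has_packing (fun P => in_interval V adj x y P /\ in_interval V adj x z P) a /\
    has_packing (fun P => in_interval V adj x y P /\ in_interval V adj z y P) b /\
    k <= a + b + 1.
Proof.
  intros [l [<- [Hin Hno]]].
  pose (towards h := asbool (forall P, In P (copy h) -> P z)).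
  pose (away h := asbool (forall P, In P (copy h) -> ~ P z)).
  pose (straddles h := asbool (splits V z (copy h))).
  exists (length (filter towards l)), (length (filter away l)). split; [|split].
  - eexists; split; [reflexivity|]. apply (packing_filter (in_interval V adj x y)); [|split; auto].
    intros h Hh Hxy P HP. apply asboolW in Hh. destruct (Hxy P HP) as [Hhs [Hx Hy]].
    repeat split; auto. apply Hh; auto.
  - eexists; split; [reflexivity|]. apply (packing_filter (in_interval V adj x y)); [|split; auto].
    intros h Hh Hxy P HP. apply asboolW in Hh. destruct (Hxy P HP) as [Hhs [Hx Hy]].
    repeat split; auto.
  - assert (Hsplit : length (filter straddles l) <= 1).
    { apply ForallOrdPairs_length_le1 with (R := fun h h' => ~ overlap V (copy h) (copy h')).
      - apply ForallOrdPairs_filter; auto.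
      - intros h h' Hh Hh' Hnov. apply filter_In in Hh, Hh'.
        destruct Hh as [Hh Hs], Hh' as [Hh' Hs']. apply asboolW in Hs, Hs'.
        apply (stacked_not_both_split V z (copy h) (copy h')); auto.
        apply (copies_stacked x y); auto. }
    enough (length l <= length (filter towards l) + length (filter away l)
                        + length (filter straddles l)) by lia.
    apply length_le_filter3. intros h _.
    destruct (towards_away_or_splits V z (copy h)) as [H|[H|H]];
      [left | right; left | right; right]; apply asboolT; auto.
Qed.

Lemma has_packing_merge x y z a b :
  has_packing (fun P => in_interval V adj x y P /\ in_interval V adj x z P) a ->
  has_packing (fun P => in_interval V adj x y P /\ in_interval V adj z y P) b ->
  exists k, has_packing (in_interval V adj x y) k /\ a + b <= k + 1.
Proof.
  intros [lA [<- [HinA HnoA]]] [lB [<- [HinB HnoB]]].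
  pose (blocked h := asbool (exists h', In h' lB /\ overlap V (copy h) (copy h'))).
  pose (free h := negb (blocked h)).
  exists (length (filter free lA ++ lB)). split.
  - eexists; split; [reflexivity | split].
    + intros h Hh. apply in_app_or in Hh. destruct Hh as [Hh|Hh].
      * apply filter_In in Hh. intros P HP. apply (HinA h (proj1 Hh) P HP).
      * intros P HP. apply (HinB h Hh P HP).
    + apply ForallOrdPairs_app; [apply ForallOrdPairs_filter; auto | auto |].
      intros h h' Hh Hh' Hov. apply filter_In in Hh. destruct Hh as [_ Hfree].
      unfold free, blocked in Hfree. rewrite asboolT in Hfree; [discriminate|eauto].
  - assert (Hblocked : length (filter blocked lA) <= 1).
    { apply ForallOrdPairs_length_le1 with (R := fun h h' => ~ overlap V (copy h) (copy h')).
      - apply ForallOrdPairs_filter; auto.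
      - intros h h' Hh Hh' Hnov. apply filter_In in Hh, Hh'.
        destruct Hh as [Hh Hb], Hh' as [Hh' Hb']. apply asboolW in Hb, Hb'.
        destruct Hb as [g [Hg Hov]], Hb' as [g' [Hg' Hov']].
        apply (overlapping_copies_absurd x y z h h' g g'); auto. }
    rewrite length_app, <- (filter_length blocked lA). fold free. lia.
Qed.

Lemma is_c_has_packing x y c : is_c act adj gam x y c ->
  has_packing (in_interval V adj x y) c /\
  forall m, has_packing (in_interval V adj x y) m -> m <= c.
Proof.
  intros [Hc Hmax]. split; [apply copies_count_packing; auto|].
  intros m Hm. apply Hmax, copies_count_packing; auto.
Qed.

Lemma c_cycle_le x y z cxy cyz czx cyx czy cxz :
  is_c act adj gam x y cxy -> is_c act adj gam y z cyz -> is_c act adj gam z x czx ->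
  is_c act adj gam y x cyx -> is_c act adj gam z y czy -> is_c act adj gam x z cxz ->
  cxy + cyz + czx <= cyx + czy + cxz + 6.
Proof.
  intros Hxy Hyz Hzx Hyx Hzy Hxz.
  apply is_c_has_packing in Hxy, Hyz, Hzx, Hyx, Hzy, Hxz.
  destruct (has_packing_split x y z cxy) as [a1 [b1 [A1 [B1 E1]]]]; [apply Hxy|].
  destruct (has_packing_split y z x cyz) as [a2 [b2 [A2 [B2 E2]]]]; [apply Hyz|].
  destruct (has_packing_split z x y czx) as [a3 [b3 [A3 [B3 E3]]]]; [apply Hzx|].
  destruct (has_packing_merge y x z a2 b3) as [k1 [K1 F1]]; auto using has_packing_meet_comm.
  destruct (has_packing_merge z y x a3 b1) as [k2 [K2 F2]]; auto using has_packing_meet_comm.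
  destruct (has_packing_merge x z y a1 b2) as [k3 [K3 F3]]; auto using has_packing_meet_comm.
  apply Hyx in K1. apply Hzy in K2. apply Hxz in K3. lia.
Qed.

End Copies.

Theorem lemma4p7 (V : Type) (adj : V -> V -> Prop) (G : group) (act : G -> V -> V)
  (HX : median_graph V adj)
  (Hact : action_by_automorphisms G V adj act)
  (Hnt : non_transverse act adj)
  (gam : list (vset V)) (Hgam : is_segment V adj gam)
  (x y z : V) (cxy cyx' cyz czy' czx cxz' : nat) :
  is_c act adj gam x y cxy -> is_c act adj (seg_rev V gam) x y cyx' ->
  is_c act adj gam y z cyz -> is_c act adj (seg_rev V gam) y z czy' ->
  is_c act adj gam z x czx -> is_c act adj (seg_rev V gam) z x cxz' ->
  (Z.abs ((Z.of_nat cxy - Z.of_nat cyx') + (Z.of_nat cyz - Z.of_nat czy')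
          + (Z.of_nat czx - Z.of_nat cxz')) <= 6)%Z.
Proof.
  intros Hxy Hyx Hyz Hzy Hzx Hxz.
  rewrite (is_c_rev V adj G act HX Hact) in Hyx, Hzy, Hxz.
  assert (Hfwd := c_cycle_le V adj G act Hact Hnt gam Hgam x y z _ _ _ _ _ _
                    Hxy Hyz Hzx Hyx Hzy Hxz).
  assert (Hbwd := c_cycle_le V adj G act Hact Hnt gam Hgam x z y _ _ _ _ _ _
                    Hxz Hzy Hyx Hzx Hyz Hxy).
  lia.
Qed.
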